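(* Let $q$ be a prime power and $m$ a positive integer with $m\mid q-1$. Let $\mathrm{Fix}(a)$ be the set of cyclic subgroups $H\le D(2,q)$ of order $m$ with $aHa^{-1}=H$; every such $H$ is of the form $\langle\mathrm{dia}(\lambda,\lambda^l)\rangle$ with $\lambda\in\mathbb{F}_q^*$ of order $m$ and $l\in(\mathbb{Z}/m\mathbb{Z})^\times$, $l^2\equiv1\pmod m$, with $l$ uniquely determined by $H$. Then the map $\mathrm{Fix}(a)\to\mathrm{Aut}(\mathbb{Z}_m)\cong(\mathbb{Z}/m\mathbb{Z})^\times$, $\langle\mathrm{dia}(\lambda,\lambda^l)\rangle\mapsto l$, is bijective if and only if $m=2^t3^s$ with $0\le t\le 3$ and $0\le s\le 1$.
   Context: $D(2,q)$ is the group of invertible diagonal $2\times2$ matrices over $\mathbb{F}_q$; $\mathrm{dia}(d_1,d_2)$ denotes the diagonal matrix with diagonal entries $d_1,d_2$; $a=\begin{pmatrix}0&1\\1&0\end{pmatrix}$. *)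

From HB Require Import structures.
From mathcomp Require Import all_boot all_order all_algebra all_fingroup all_solvable all_field.
Set Implicit Arguments. Unset Strict Implicit. Unset Printing Implicit Defensive.
Import GRing.Theory.
Local Open Scope ring_scope.
Local Open Scope group_scope.

Section D2q.
Variable F : finFieldType.

Definition dia (d1 d2 : F) : 'M[F]_2 :=
  \matrix_(i < 2, j < 2) (if i == j then (if i == ord0 then d1 else d2) else 0%R).

Definition swapmx : 'M[F]_2 := \matrix_(i < 2, j < 2) (i != j)%:R.

Definition D2 : {set {'GL_2[F]}} := [set g : {'GL_2[F]} | is_diag_mx (GLval g)].

Definition Fixa (a : {'GL_2[F]}) (m : nat) : {set {group {'GL_2[F]}}} :=
  [set H : {group {'GL_2[F]}} |
     [&& H \subset D2, cyclic H, #|H| == m & H :^ a^-1 == H]].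

Definition corr (m : nat) (H : {group {'GL_2[F]}}) (l : nat) : bool :=
  [exists lam : F, m.-primitive_root lam &&
     [exists d : {'GL_2[F]}, (GLval d == dia lam (lam ^+ l)%R) && (H == <[d]> :> {set _})]].

Definition fixmap (m : nat) (H : {group {'GL_2[F]}}) : option 'I_m :=
  [pick l : 'I_m | coprime l m && corr m H l].

Definition fixmap_bijective (a : {'GL_2[F]}) (m : nat) : Prop :=
  (forall H1 H2, H1 \in Fixa a m -> H2 \in Fixa a m ->
     fixmap m H1 = fixmap m H2 -> H1 = H2) /\
  (forall H, H \in Fixa a m -> exists l, fixmap m H = Some l) /\
  (forall l : 'I_m, coprime l m -> exists2 H, H \in Fixa a m & fixmap m H = Some l).
End D2q.

From HB Require Import structures.
From mathcomp Require Import all_boot all_order all_algebra all_fingroup all_solvable all_field.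
Set Implicit Arguments. Unset Strict Implicit. Unset Printing Implicit Defensive.
Import GRing.Theory.

(* Every H in Fix(a) is generated by some d = dia(lam, lam^l) with lam of order m.  Conjugation
   by a swaps the diagonal entries, so a-invariance of H means dia(lam^l, lam) = d^k for some k,
   which amounts to l^2 = 1 (mod m); conversely every such l yields the a-invariant group
   <dia(lam, lam^l)>.  Hence H |-> l is injective and its image is the set of square roots of 1
   in (Z/mZ)^x, so it is onto (Z/mZ)^x exactly when every unit modulo m squares to 1, i.e.
   when m divides 24. *)

Definition units_sqr_eq1 m := forall l, coprime l m -> l * l = 1 %[mod m].

Lemma coprime_sqr_eq1 l m : l * l = 1 %[mod m] -> coprime l m.
Proof.
move=> ll1; have : coprime (l * l) m by rewrite -coprime_modl ll1 coprime_modl coprime1n.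
by rewrite coprimeMl andbb.
Qed.

Lemma units_sqr_eq1_coprime_dvd m1 m2 :
  coprime m1 m2 -> units_sqr_eq1 (m1 * m2) -> units_sqr_eq1 m1.
Proof.
move=> co sq l cl; pose k := chinese m1 m2 l 1.
have kl : k = l %[mod m1] := chinese_modl co l 1.
have k_unit : coprime k (m1 * m2).
  rewrite coprimeMr -coprime_modl kl coprime_modl cl /=.
  by rewrite -coprime_modl (chinese_modr co) coprime_modl coprime1n.
rewrite -modnMml -modnMmr -kl modnMml modnMmr.
by have /(congr1 (modn^~ m1)) := sq k k_unit; rewrite !modn_dvdm ?dvdn_mulr.
Qed.

Lemma units_sqr_eq1_dvdn24 m : 0 < m -> units_sqr_eq1 m -> m %| 24.
Proof.
move=> m_gt0 sq; have [n n_odd Em] := pfactor_coprime (isT : prime 2) m_gt0.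
set t := logn 2 m in Em; rewrite Em (_ : 24 = 3 * 2 ^ 3) //.
have co : coprime (2 ^ t) n by rewrite coprimeXl.
have sq_2t : units_sqr_eq1 (2 ^ t).
  by apply: units_sqr_eq1_coprime_dvd co _; rewrite mulnC -Em.
have sq_n : units_sqr_eq1 n.
  by rewrite coprime_sym in co; apply: units_sqr_eq1_coprime_dvd co _; rewrite -Em.
(* 2 is a unit modulo the odd part n, and 3 modulo the 2-part 2 ^ t. *)
apply: dvdn_mul.
- by have /eqP := sq_n 2 n_odd; rewrite eqn_mod_dvd.
- have /eqP := sq_2t 3 (coprimeXr t (isT : coprime 3 2)).
  by rewrite eqn_mod_dvd // dvdn_Pexp2l.
Qed.

Lemma dvdn24_units_sqr_eq1 m : m %| 24 -> units_sqr_eq1 m.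
Proof.
have table : all (fun d => all (fun l => ~~ coprime l d || (l * l == 1 %[mod d]))
                               (iota 0 d)) (divisors 24) by vm_compute.
move=> m24 l; have m_gt0 : 0 < m by case: m m24.
move/allP/(_ m): table; rewrite -dvdn_divisors // => /(_ m24) /allP /(_ (l %% m)).
rewrite mem_iota ltn_mod m_gt0 coprime_modl modnMml modnMmr => /(_ isT) /orP[/negP | /eqP] //.
Qed.

Lemma dvdn24P m : reflect (exists t s, [/\ t <= 3, s <= 1 & m = 2 ^ t * 3 ^ s]) (m %| 24).
Proof.
apply: (iffP idP) => [m24 | [t [s [t3 s1 ->]]]]; last first.
  by rewrite (_ : 24 = 2 ^ 3 * 3 ^ 1) // dvdn_mul ?dvdn_exp2l.
have /allP table : all (mem [seq 2 ^ t * 3 ^ s | t <- iota 0 4, s <- iota 0 2])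
                       (divisors 24) by vm_compute.
rewrite dvdn_divisors // in m24.
have /allpairsP[[t s] [t3 s1 ->]] := table m m24.
by exists t, s; move: t3 s1; rewrite !mem_iota.
Qed.

Lemma GL_XE n (R : finComUnitRingType) (g : {'GL_n[R]}) k :
  GLval (g ^+ k)%g = (GLval g ^+ k)%R.
Proof. by elim: k => // k IHk; rewrite expgS GL_ME IHk exprS. Qed.

Lemma eq_prim_root_order (R : nzRingType) m n (z : R) :
  (m.-primitive_root z -> n.-primitive_root z -> m = n)%R.
Proof.
move=> z_m z_n; apply/eqP.
by rewrite eqn_dvd (prim_order_dvd z_m) (prim_order_dvd z_n)
           (prim_expr_order z_m) (prim_expr_order z_n) eqxx.
Qed.

Lemma GLval_inj n (R : finComUnitRingType) : injective (@GLval n R).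
Proof. exact: val_inj. Qed.

Section Diagonal.
Variable F : finFieldType.
Local Open Scope ring_scope.

Ltac mx2_ext := apply/matrixP => -[[|[|//]] ?] [[|[|//]] ?];
  rewrite !(mxE, big_ord0, big_ord_recl) /=;
  by rewrite ?mulr0 ?mul0r ?addr0 ?add0r ?mulr1 ?mul1r.

Lemma dia_mul (x y x' y' : F) : dia x y * dia x' y' = dia (x * x') (y * y').
Proof. mx2_ext. Qed.

Lemma dia1 : dia 1 1 = 1 :> 'M[F]_2.
Proof. mx2_ext. Qed.

Lemma dia_expr (x y : F) k : dia x y ^+ k = dia (x ^+ k) (y ^+ k).
Proof. by elim: k => [|k IHk]; rewrite ?dia1 // exprS IHk dia_mul -!exprS. Qed.

Lemma dia_inj (x y x' y' : F) : dia x y = dia x' y' -> x = x' /\ y = y'.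
Proof. by move/matrixP => E; move: (E 0 0) (E 1 1); rewrite !mxE. Qed.

Lemma swapmx_sqr : swapmx F * swapmx F = 1.
Proof. mx2_ext. Qed.

Lemma swapmx_dia_swapmx (x y : F) : swapmx F * dia x y * swapmx F = dia y x.
Proof. mx2_ext. Qed.

Lemma dia_unit (x y : F) : x != 0 -> y != 0 -> dia x y \is a GRing.unit.
Proof.
move=> x0 y0; apply/unitrP; exists (dia x^-1 y^-1).
by rewrite !dia_mul !mulfV ?mulVf // dia1.
Qed.

End Diagonal.

Lemma finField_prim_root (F : finFieldType) m :
  0 < m -> m %| #|F|.-1 -> exists lam : F, (m.-primitive_root lam)%R.
Proof.
move=> m_gt0 m_dvd; have q_gt1 := finNzRing_gt1 F.
have q1_gt0 : 0 < #|F|.-1 by rewrite ltn_predRL.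
have unity_nz (x : F) : (x != 0 -> x ^+ #|F|.-1 = 1)%R.
  by move=> x_neq0; apply: (mulIf x_neq0); rewrite mul1r -exprSr prednK ?expf_card // ltnW.
have : has (#|F|.-1).-primitive_root%R (enum (predC1 (0 : F)%R)).
  apply: has_prim_root q1_gt0 _ (enum_uniq _) _; last by rewrite -cardE cardC1.
  by apply/allP => x; rewrite mem_enum => /unity_nz; rewrite unity_rootE => ->.
by case/hasP => g _ g_prim; exists (g ^+ (#|F|.-1 %/ m))%R; apply: dvdn_prim_root.
Qed.

Section DiagonalGL.
Variable F : finFieldType.
Implicit Types (g : {'GL_2[F]}) (x y : F).
Local Open Scope ring_scope.

Lemma GL_dia x y : x != 0 -> y != 0 -> {g : {'GL_2[F]} | GLval g = dia x y}.
Proof. by move=> x0 y0; exists (FinRing.unit _ (dia_unit x0 y0)). Qed.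

Lemma D2_diaE g : g \in D2 F -> GLval g = dia (GLval g 0 0) (GLval g 1 1).
Proof.
rewrite inE => /is_diag_mxP g_diag; apply/matrixP => i j.
rewrite mxE; case: eqP => [<- | /eqP ij]; last exact: g_diag.
by case: i => [[|[|//]] ?] /=; congr (GLval g _ _); apply: val_inj.
Qed.

Lemma dia_D2 g x y : GLval g = dia x y -> g \in D2 F.
Proof.
move=> gE; rewrite inE gE; apply/is_diag_mxP => i j.
by rewrite mxE; case: ifP => // /eqP->; rewrite eqxx.
Qed.

Lemma dia_expg g x y k : GLval g = dia x y -> GLval (g ^+ k)%g = dia (x ^+ k) (y ^+ k).
Proof. by move=> gE; rewrite GL_XE gE dia_expr. Qed.

Lemma dia_expg_eq1 g x k n :
  GLval g = dia x (x ^+ k) -> (g ^+ n == 1)%g = (x ^+ n == 1).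
Proof.
move=> gE; apply/eqP/eqP => [/(congr1 GLval) | xn1].
  by rewrite (dia_expg n gE) GL_1E -dia1 => /dia_inj[].
by apply: GLval_inj; rewrite (dia_expg n gE) exprAC xn1 expr1n dia1.
Qed.

Lemma dia_order_prim_root g x k : GLval g = dia x (x ^+ k) -> #[g]%g.-primitive_root x.
Proof.
move=> gE; have gX n := dia_expg_eq1 n gE.
have x_ord : x ^+ #[g]%g = 1 by apply/eqP; rewrite -gX expg_order.
have [n x_prim n_dvd] := prim_order_exists (order_gt0 g) x_ord.
suff -> : #[g]%g = n by [].
by apply/eqP; rewrite eqn_dvd n_dvd order_dvdn gX -(prim_order_dvd x_prim) dvdnn.
Qed.

End DiagonalGL.

Section Correspondence.
Variables (F : finFieldType) (m : nat).
Local Open Scope ring_scope.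

Lemma dia_prim_root_cycle l (lam mu : F) (d e : {'GL_2[F]}) :
  m.-primitive_root lam -> m.-primitive_root mu ->
  GLval d = dia lam (lam ^+ l) -> GLval e = dia mu (mu ^+ l) -> e \in <[d]>%g.
Proof.
move=> lam_prim mu_prim dE eE.
have [i muE] := prim_rootP lam_prim (prim_expr_order mu_prim).
apply/cycleP; exists i; apply: GLval_inj.
by rewrite eE (dia_expg i dE) muE -!exprM mulnC.
Qed.

Lemma corr_group_uniq (H1 H2 : {group {'GL_2[F]}}) l :
  corr m H1 l -> corr m H2 l -> H1 = H2.
Proof.
case/existsP => lam /andP[lam_prim /existsP[d /andP[/eqP dE /eqP H1_d]]].
case/existsP => mu /andP[mu_prim /existsP[e /andP[/eqP eE /eqP H2_e]]].
apply: val_inj; rewrite /= H1_d H2_e; apply/eqP; rewrite eqEsubset !cycle_subG.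
by rewrite (dia_prim_root_cycle lam_prim mu_prim dE eE)
           (dia_prim_root_cycle mu_prim lam_prim eE dE).
Qed.

Lemma corr_uniq (H : {group {'GL_2[F]}}) l l' :
  (l < m)%N -> (l' < m)%N -> corr m H l -> corr m H l' -> l = l'.
Proof.
move=> l_lt_m l'_lt_m.
case/existsP => lam /andP[_ /existsP[d /andP[/eqP dE /eqP H_d]]].
case/existsP => mu /andP[mu_prim /existsP[e /andP[/eqP eE /eqP H_e]]].
have /cycleP[j eE'] : e \in <[d]>%g by rewrite -H_d H_e cycle_id.
move: eE; rewrite eE' (dia_expg j dE) => /dia_inj[muE mulE].
have : mu ^+ l' == mu ^+ l by rewrite -mulE -muE -!exprM mulnC.
by rewrite (eq_prim_root_expr mu_prim) !modn_small // => /eqP.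
Qed.

End Correspondence.

Section FixSwap.
Variables (F : finFieldType) (a : {'GL_2[F]}) (m : nat).
Hypothesis aE : GLval a = swapmx F.
Local Open Scope ring_scope.

Lemma swapmx_invg : (a^-1 = a)%g.
Proof.
by apply/eqP; rewrite eq_invg_mul; apply/eqP/GLval_inj; rewrite GL_ME aE swapmx_sqr.
Qed.

Lemma conj_swapmx_dia (g : {'GL_2[F]}) x y :
  GLval g = dia x y -> GLval (g ^ a^-1)%g = dia y x.
Proof.
by move=> gE; rewrite /conjg invgK swapmx_invg !GL_ME aE gE mulrA swapmx_dia_swapmx.
Qed.

Lemma swapmx_conj_cycle (g : {'GL_2[F]}) x y :
  GLval g = dia x y -> (g ^ a^-1)%g \in <[g]>%g -> exists k, x = y ^+ k /\ y = x ^+ k.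
Proof.
move=> gE /cycleP[k gk]; exists k.
by have := conj_swapmx_dia gE; rewrite gk (dia_expg k gE) => /dia_inj[-> ->].
Qed.

Lemma Fixa_conj (H : {group {'GL_2[F]}}) g :
  H \in Fixa a m -> g \in H -> (g ^ a^-1)%g \in H.
Proof. by rewrite inE => /and4P[_ _ _ /eqP {2}<-]; rewrite memJ_conjg. Qed.

Lemma corr_sqr_eq1 (H : {group {'GL_2[F]}}) l :
  H \in Fixa a m -> corr m H l -> (l * l = 1 %[mod m])%N.
Proof.
move=> HF /existsP[lam /andP[lam_prim /existsP[d /andP[/eqP dE /eqP H_d]]]].
have d_conj : (d ^ a^-1)%g \in <[d]>%g by rewrite -H_d Fixa_conj // H_d cycle_id.
have [k [lamE lamlE]] := swapmx_conj_cycle dE d_conj.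
have : lam ^+ (l * l) = lam ^+ 1 by rewrite expr1 exprM {1}lamlE exprAC -lamE.
by move/eqP; rewrite (eq_prim_root_expr lam_prim) => /eqP.
Qed.

Lemma Fixa_corr (H : {group {'GL_2[F]}}) :
  (0 < m)%N -> H \in Fixa a m -> exists2 l : 'I_m, coprime l m & corr m H l.
Proof.
move=> m_gt0 HF; have := HF; rewrite inE => /and4P[HD /cyclicP[g H_g] /eqP H_m _].
have gH : g \in H by rewrite H_g cycle_id.
have gE := D2_diaE (subsetP HD g gH).
have g_conj : (g ^ a^-1)%g \in <[g]>%g by rewrite -H_g Fixa_conj.
have [k [xE yE]] := swapmx_conj_cycle gE g_conj; rewrite yE in gE.
set x := GLval g 0 0 in xE gE.
have x_prim : m.-primitive_root x by rewrite -H_m H_g (dia_order_prim_root gE).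
have kk : (k * k = 1 %[mod m])%N.
  by apply/eqP; rewrite -(eq_prim_root_expr x_prim) expr1 exprM -yE -xE.
exists (Ordinal (ltn_pmod k m_gt0)); first by rewrite /= coprime_modl coprime_sqr_eq1.
apply/existsP; exists x; rewrite x_prim; apply/existsP; exists g.
by rewrite gE /= prim_expr_mod // H_g !eqxx.
Qed.

Lemma corr_Fixa (lam : F) l : m.-primitive_root lam -> (l * l = 1 %[mod m])%N ->
  exists2 H : {group {'GL_2[F]}}, H \in Fixa a m & corr m H l.
Proof.
move=> lam_prim ll1.
have lam_neq0 : lam != 0 by rewrite (prim_root_eq0 lam_prim) -lt0n (prim_order_gt0 lam_prim).
have [d dE] := GL_dia lam_neq0 (expf_neq0 l lam_neq0).
have d_order : #[d]%g = m := eq_prim_root_order (dia_order_prim_root dE) lam_prim.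
have d_conj : (d ^ a^-1 = d ^+ l)%g.
  apply: GLval_inj; rewrite (conj_swapmx_dia dE) (dia_expg l dE) -exprM.
  by rewrite -(prim_expr_mod lam_prim (l * l)) ll1 prim_expr_mod ?expr1.
exists <[d]>%G; last first.
  by apply/existsP; exists lam; rewrite lam_prim; apply/existsP; exists d; rewrite dE !eqxx.
rewrite inE; apply/and4P; split.
- by apply/subsetP => _ /cycleP[i ->]; apply: dia_D2 (dia_expg i dE).
- exact: cycle_cyclic.
- exact/eqP.
- rewrite -cycleJ d_conj eqEcard cycleX /= -!/(order _) orderXgcd d_order.
  by rewrite gcdnC (eqP (coprime_sqr_eq1 ll1)) divn1.
Qed.

End FixSwap.

Section Fixmap.
Variables (F : finFieldType) (a : {'GL_2[F]}) (m : nat).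
Hypotheses (aE : GLval a = swapmx F) (m_gt0 : 0 < m).

Lemma fixmap_corr (H : {group {'GL_2[F]}}) l : fixmap m H = Some l -> corr m H l.
Proof. by rewrite /fixmap; case: pickP => // l' /andP[_ H_l'] [<-]. Qed.

Lemma Fixa_fixmap (H : {group {'GL_2[F]}}) : H \in Fixa a m -> exists l, fixmap m H = Some l.
Proof.
move=> HF; rewrite /fixmap; case: pickP => [l _ | no_l]; first by exists l.
by have [l l_unit H_l] := Fixa_corr aE m_gt0 HF; move: (no_l l); rewrite l_unit H_l.
Qed.

Lemma fixmap_surj_units_sqr_eq1 :
  (forall l : 'I_m, coprime l m -> exists2 H, H \in Fixa a m & fixmap m H = Some l) ->
  units_sqr_eq1 m.
Proof.
move=> fixmap_surj l l_unit.
have l_unit' : coprime (Ordinal (ltn_pmod l m_gt0)) m by rewrite coprime_modl.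
have [H HF /fixmap_corr H_l] := fixmap_surj _ l_unit'.
by have := corr_sqr_eq1 aE HF H_l; rewrite /= modnMml modnMmr.
Qed.

Lemma units_sqr_eq1_fixmap_bijective :
  m %| #|F|.-1 -> units_sqr_eq1 m -> fixmap_bijective a m.
Proof.
move=> m_dvd sq; split; [|split]; last 1 first.
- move=> l l_unit; have [lam lam_prim] := finField_prim_root m_gt0 m_dvd.
  have [H HF H_l] := corr_Fixa aE lam_prim (sq l l_unit).
  exists H => //; have [l' H_l'] := Fixa_fixmap HF; rewrite H_l'; congr Some.
  exact/val_inj/(corr_uniq (ltn_ord _) (ltn_ord _) (fixmap_corr H_l') H_l).
- move=> H1 H2 /Fixa_fixmap[l H1_l] /Fixa_fixmap[l' H2_l']; rewrite H1_l H2_l' => -[l_l'].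
  by move: H2_l'; rewrite -l_l' => /fixmap_corr; apply/corr_group_uniq/fixmap_corr.
- exact: Fixa_fixmap.
Qed.

End Fixmap.

Theorem mainTheorem7 (F : finFieldType) (m : nat) (a : {'GL_2[F]}) :
  (0 < m)%N -> (m %| #|F|.-1)%N -> GLval a = swapmx F ->
  fixmap_bijective a m <->
  (exists t s : nat, [/\ (t <= 3)%N, (s <= 1)%N & m = (2 ^ t * 3 ^ s)%N]).
Proof.
move=> m_gt0 m_dvd aE; split => [[_ [_ fixmap_surj]] | /dvdn24P/dvdn24_units_sqr_eq1 sq].
- apply/dvdn24P/(units_sqr_eq1_dvdn24 m_gt0).
  exact: fixmap_surj_units_sqr_eq1 aE m_gt0 fixmap_surj.
- exact: units_sqr_eq1_fixmap_bijective.
Qed.
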